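(* Let $\Omega\subset\mathbb{R}^2$ be a domain and $u\in C^{2}(\Omega)$. Let $S(u)=\{(x,y)\in\Omega:u_x-y=0,\ u_y+x=0\}$, on $\Omega\setminus S(u)$ let $D=\sqrt{(u_x-y)^2+(u_y+x)^2}$, $N(u)=(u_x-y,u_y+x)/D$, $N^\perp(u)=(u_y+x,-(u_x-y))/D$, and $H=\operatorname{div}N(u)$. Let $p_0\in S(u)$ be an isolated point of $S(u)$ and suppose $|H(p)|=o(1/r(p))$ as $p\to p_0$, where $r(p)=|p-p_0|$. Consider the $C^1$ vector field $N^\perp D=(u_y+x,\,-u_x+y)$ on $\Omega$ as a map $\Omega\to\mathbb{R}^2$. Then the differential $d(N^\perp D)_{p_0}$ is the identity linear transformation, the index of $N^\perp D$ at its isolated zero $p_0$ is $+1$, and $u_{xx}=u_{xy}=u_{yy}=0$ at $p_0$. *)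

From Stdlib Require Import Reals Lra.
From Coquelicot Require Import Coquelicot.
Open Scope R_scope.

Definition pt := (R * R)%type.

Definition dist2 (p q : pt) : R :=
  sqrt ((fst p - fst q)^2 + (snd p - snd q)^2).

Definition norm2 (v : pt) : R := sqrt ((fst v)^2 + (snd v)^2).

Definition open2 (O : pt -> Prop) : Prop :=
  forall p, O p -> exists e, 0 < e /\ forall q, dist2 q p < e -> O q.

Definition connected2 (O : pt -> Prop) : Prop :=
  forall U V : pt -> Prop, open2 U -> open2 V ->
    (forall p, O p -> U p \/ V p) ->
    (forall p, O p -> U p -> V p -> False) ->
    (exists p, O p /\ U p) -> (exists p, O p /\ V p) -> False.

Definition domain2 (O : pt -> Prop) : Prop :=
  (exists p, O p) /\ open2 O /\ connected2 O.

Definition cont2_at (f : pt -> R) (p : pt) : Prop :=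
  forall e, 0 < e -> exists d, 0 < d /\
    forall q, dist2 q p < d -> Rabs (f q - f p) < e.

Definition dx (f : pt -> R) : pt -> R := fun p => Derive (fun t => f (t, snd p)) (fst p).
Definition dy (f : pt -> R) : pt -> R := fun p => Derive (fun t => f (fst p, t)) (snd p).
Definition ex_dx (f : pt -> R) (p : pt) : Prop := ex_derive (fun t => f (t, snd p)) (fst p).
Definition ex_dy (f : pt -> R) (p : pt) : Prop := ex_derive (fun t => f (fst p, t)) (snd p).

Definition C2_on (O : pt -> Prop) (u : pt -> R) : Prop :=
  forall p, O p ->
    ex_dx u p /\ ex_dy u p /\
    ex_dx (dx u) p /\ ex_dy (dx u) p /\ ex_dx (dy u) p /\ ex_dy (dy u) p /\
    cont2_at u p /\ cont2_at (dx u) p /\ cont2_at (dy u) p /\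
    cont2_at (dx (dx u)) p /\ cont2_at (dy (dx u)) p /\
    cont2_at (dx (dy u)) p /\ cont2_at (dy (dy u)) p.

Definition sing (O : pt -> Prop) (u : pt -> R) (p : pt) : Prop :=
  O p /\ dx u p - snd p = 0 /\ dy u p + fst p = 0.

Definition Dlen (u : pt -> R) (p : pt) : R :=
  sqrt ((dx u p - snd p)^2 + (dy u p + fst p)^2).

Definition N1 (u : pt -> R) (p : pt) : R := (dx u p - snd p) / Dlen u p.
Definition N2 (u : pt -> R) (p : pt) : R := (dy u p + fst p) / Dlen u p.

(* H = div N(u) (meaningful on Omega \ S(u)) *)
Definition Hcurv (u : pt -> R) (p : pt) : R := dx (N1 u) p + dy (N2 u) p.

Definition NperpD (u : pt -> R) (p : pt) : pt :=
  (dy u p + fst p, - dx u p + snd p).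

Definition isolated_sing (O : pt -> Prop) (u : pt -> R) (p0 : pt) : Prop :=
  sing O u p0 /\ exists d, 0 < d /\
    forall p, O p -> 0 < dist2 p p0 < d -> ~ sing O u p.

Definition differential_is_id (V : pt -> pt) (p0 : pt) : Prop :=
  forall e, 0 < e -> exists d, 0 < d /\
    forall p, dist2 p p0 < d ->
      norm2 (fst (V p) - fst (V p0) - (fst p - fst p0),
             snd (V p) - snd (V p0) - (snd p - snd p0)) <= e * dist2 p p0.

Definition index_at (V : pt -> pt) (p0 : pt) (k : Z) : Prop :=
  V p0 = (0, 0) /\
  exists eps, 0 < eps /\
    (forall p, 0 < dist2 p p0 < eps -> V p <> (0, 0)) /\
    forall r, 0 < r < eps ->
      exists theta : R -> R,
        (forall t, continuity_pt theta t) /\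
        (forall t, 0 <= t <= 2 * PI ->
           let q := V (fst p0 + r * cos t, snd p0 + r * sin t) in
           fst q = norm2 q * cos (theta t) /\ snd q = norm2 q * sin (theta t)) /\
        theta (2 * PI) - theta 0 = 2 * PI * IZR k.

From Stdlib Require Import Reals Lra.
From Coquelicot Require Import Coquelicot.
Open Scope R_scope.

(* Write a = u_x - y and b = u_y + x, so that V := N^perp D = (b, -a) and D = |V|.
   Differentiating N = (a, b) / D gives H D^3 = Hess u (V, V). Since D = O(r) and
   H = o(1/r), Hess u_p (V(p)) = o(|V(p)|^2), and by continuity the same holds for the
   fixed quadratic form Q = Hess u_{p0}.
   By Schwarz the differential J of V at p0 has trace 2, so c = J w is nonzero for some
   unit vector w. On a small circle around p0, V is close to r c in direction w and to
   -r c in direction -w; by the intermediate value theorem V(p) is parallel to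
   k c + c^perp or to k c - c^perp somewhere, for each k in [0, 2]. So Q vanishes on three
   pairwise independent vectors, i.e. Q = 0 and the Hessian of u vanishes at p0. Then J is
   the identity, and on small circles V points outwards, which gives index 1. *)

Lemma sqrt_sum_sqr_le (a b : R) : sqrt (a ^ 2 + b ^ 2) <= Rabs a + Rabs b.
Proof.
  rewrite <- (sqrt_pow2 (Rabs a + Rabs b)) by (generalize (Rabs_pos a) (Rabs_pos b); lra).
  apply sqrt_le_1_alt.
  rewrite <- (pow2_abs a), <- (pow2_abs b).
  generalize (Rabs_pos a) (Rabs_pos b); nra.
Qed.

Lemma Rabs_le_sqrt_sum_sqr (a b : R) : Rabs a <= sqrt (a ^ 2 + b ^ 2).
Proof.
  rewrite <- (sqrt_pow2 (Rabs a)) by apply Rabs_pos.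
  apply sqrt_le_1_alt. rewrite pow2_abs. nra.
Qed.

Lemma norm2_le_Rabs (v : pt) : norm2 v <= Rabs (fst v) + Rabs (snd v).
Proof. apply sqrt_sum_sqr_le. Qed.

Lemma Rabs_fst_le_norm2 (v : pt) : Rabs (fst v) <= norm2 v.
Proof. apply Rabs_le_sqrt_sum_sqr. Qed.

Lemma Rabs_snd_le_norm2 (v : pt) : Rabs (snd v) <= norm2 v.
Proof. unfold norm2. rewrite Rplus_comm. apply Rabs_le_sqrt_sum_sqr. Qed.

Lemma dist2_norm2 (p q : pt) : dist2 p q = norm2 (fst p - fst q, snd p - snd q).
Proof. reflexivity. Qed.

Lemma Rabs_fst_le_dist2 (p q : pt) : Rabs (fst p - fst q) <= dist2 p q.
Proof. rewrite dist2_norm2. exact (Rabs_fst_le_norm2 (_, _)). Qed.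

Lemma Rabs_snd_le_dist2 (p q : pt) : Rabs (snd p - snd q) <= dist2 p q.
Proof. rewrite dist2_norm2. exact (Rabs_snd_le_norm2 (_, _)). Qed.

Lemma dist2_le_Rabs (p q : pt) : dist2 p q <= Rabs (fst p - fst q) + Rabs (snd p - snd q).
Proof. rewrite dist2_norm2. exact (norm2_le_Rabs (_, _)). Qed.

Lemma dist2_refl (p : pt) : dist2 p p = 0.
Proof.
  unfold dist2. rewrite !Rminus_diag. replace (0 ^ 2 + 0 ^ 2) with 0 by ring. apply sqrt_0.
Qed.

Lemma dist2_le_compat (p q p0 : pt) :
  Rabs (fst p - fst p0) <= Rabs (fst q - fst p0) ->
  Rabs (snd p - snd p0) <= Rabs (snd q - snd p0) ->
  dist2 p p0 <= dist2 q p0.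
Proof.
  intros Hx Hy. unfold dist2. apply sqrt_le_1_alt.
  rewrite <- (pow2_abs (fst p - fst p0)), <- (pow2_abs (snd p - snd p0)),
    <- (pow2_abs (fst q - fst p0)), <- (pow2_abs (snd q - snd p0)).
  generalize (Rabs_pos (fst p - fst p0)) (Rabs_pos (snd p - snd p0)); nra.
Qed.

Definition circle_pt (p0 : pt) (r t : R) : pt := (fst p0 + r * cos t, snd p0 + r * sin t).

Lemma dist2_circle_pt (p0 : pt) (r t : R) : 0 <= r -> dist2 (circle_pt p0 r t) p0 = r.
Proof.
  intros Hr. unfold dist2, circle_pt; cbn [fst snd].
  replace ((fst p0 + r * cos t - fst p0) ^ 2 + (snd p0 + r * sin t - snd p0) ^ 2)
    with (r ^ 2 * ((sin t)² + (cos t)²)) by (unfold Rsqr; ring).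
  rewrite sin2_cos2, Rmult_1_r. apply sqrt_pow2, Hr.
Qed.

(* [cont2_at f p] unfolds to [forall e, 0 < e -> near p (fun q => Rabs (f q - f p) < e)],
   which the proofs below use without further notice. *)
Definition near (p0 : pt) (P : pt -> Prop) : Prop :=
  exists d, 0 < d /\ forall p, dist2 p p0 < d -> P p.

Lemma near_ball (p0 : pt) (d : R) : 0 < d -> near p0 (fun p => dist2 p p0 < d).
Proof. intros Hd. exists d. auto. Qed.

Lemma near_impl (p0 : pt) (P Q : pt -> Prop) :
  near p0 P -> (forall p, P p -> Q p) -> near p0 Q.
Proof. intros [d [Hd HP]] HPQ. exists d. auto. Qed.

Lemma near_and (p0 : pt) (P Q : pt -> Prop) :
  near p0 P -> near p0 Q -> near p0 (fun p => P p /\ Q p).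
Proof.
  intros [d1 [Hd1 H1]] [d2 [Hd2 H2]]. exists (Rmin d1 d2). split.
  - apply Rmin_pos; assumption.
  - intros p Hp. split.
    + apply H1. eapply Rlt_le_trans; [exact Hp | apply Rmin_l].
    + apply H2. eapply Rlt_le_trans; [exact Hp | apply Rmin_r].
Qed.

Lemma near_center (p0 : pt) (P : pt -> Prop) : near p0 P -> P p0.
Proof. intros [d [Hd HP]]. apply HP. rewrite dist2_refl. exact Hd. Qed.

Lemma locally_2d_of_near (P : R -> R -> Prop) (x y : R) :
  near (x, y) (fun p => P (fst p) (snd p)) -> locally_2d P x y.
Proof.
  intros [d [Hd HP]]. assert (Hd2 : 0 < d / 2) by lra.
  exists (mkposreal _ Hd2). intros a b Ha Hb. simpl in Ha, Hb.
  apply (HP (a, b)). eapply Rle_lt_trans; [apply dist2_le_Rabs | simpl; lra].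
Qed.

Lemma cont2_plus (f g : pt -> R) (p : pt) :
  cont2_at f p -> cont2_at g p -> cont2_at (fun q => f q + g q) p.
Proof.
  intros Hf Hg e He.
  apply (near_impl _ _ _ (near_and _ _ _ (Hf (e / 2) ltac:(lra)) (Hg (e / 2) ltac:(lra)))).
  intros q [H1 H2].
  replace (f q + g q - (f p + g p)) with ((f q - f p) + (g q - g p)) by ring.
  eapply Rle_lt_trans; [apply Rabs_triang | lra].
Qed.

Lemma cont2_opp (f : pt -> R) (p : pt) : cont2_at f p -> cont2_at (fun q => - f q) p.
Proof.
  intros Hf e He. apply (near_impl _ _ _ (Hf e He)). intros q Hq.
  replace (- f q - - f p) with (- (f q - f p)) by ring. rewrite Rabs_Ropp. exact Hq.
Qed.

Lemma cont2_const (c : R) (p : pt) : cont2_at (fun _ => c) p.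
Proof.
  intros e He. apply (near_impl _ _ _ (near_ball p e He)). intros q _.
  rewrite Rminus_diag, Rabs_R0. exact He.
Qed.

Lemma cont2_fst (p : pt) : cont2_at fst p.
Proof.
  intros e He. apply (near_impl _ _ _ (near_ball p e He)). intros q Hq.
  eapply Rle_lt_trans; [apply Rabs_fst_le_dist2 | exact Hq].
Qed.

Lemma cont2_snd (p : pt) : cont2_at snd p.
Proof.
  intros e He. apply (near_impl _ _ _ (near_ball p e He)). intros q Hq.
  eapply Rle_lt_trans; [apply Rabs_snd_le_dist2 | exact Hq].
Qed.

Lemma continuity_2d_pt_of_cont2 (f : pt -> R) (x y : R) :
  cont2_at f (x, y) -> continuity_2d_pt (fun a b => f (a, b)) x y.
Proof.
  intros Hf eps. apply locally_2d_of_near.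
  apply (near_impl _ _ _ (Hf eps (cond_pos eps))). intros [a b] H. exact H.
Qed.

Lemma cont2_circle (f : pt -> R) (p0 : pt) (r t : R) :
  cont2_at f (circle_pt p0 r t) -> continuity_pt (fun s => f (circle_pt p0 r s)) t.
Proof.
  intros Hf. apply continuity_pt_locally. intros eps.
  destruct (Hf eps (cond_pos eps)) as [d [Hd Hnear]].
  assert (Hd2 : 0 < d / 2) by lra.
  assert (Hx : continuity_pt (fun s => fst p0 + r * cos s) t) by reg.
  assert (Hy : continuity_pt (fun s => snd p0 + r * sin s) t) by reg.
  generalize (filter_and _ _ (proj1 (continuity_pt_locally _ _) Hx (mkposreal _ Hd2))
                             (proj1 (continuity_pt_locally _ _) Hy (mkposreal _ Hd2))).
  apply filter_imp. intros s [H1 H2]. simpl in H1, H2.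
  apply Hnear. eapply Rle_lt_trans; [apply dist2_le_Rabs | unfold circle_pt; simpl; lra].
Qed.

Definition has_grad (f : pt -> R) (p0 : pt) (g1 g2 : R) : Prop :=
  forall e, 0 < e -> near p0 (fun p =>
    Rabs (f p - f p0 - (g1 * (fst p - fst p0) + g2 * (snd p - snd p0))) <= e * dist2 p p0).

(* Mean value theorem along the two sides of the coordinate rectangle spanned by p0 and p. *)
Lemma has_grad_of_partials (f fx fy : pt -> R) (p0 : pt) :
  near p0 (fun p => is_derive (fun t => f (t, snd p)) (fst p) (fx p) /\
                    is_derive (fun t => f (fst p, t)) (snd p) (fy p)) ->
  cont2_at fx p0 -> cont2_at fy p0 -> has_grad f p0 (fx p0) (fy p0).
Proof.
  intros Hder Hcx Hcy e He.
  destruct (near_and _ _ _ Hder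
              (near_and _ _ _ (Hcx (e / 2) ltac:(lra)) (Hcy (e / 2) ltac:(lra))))
    as [d [Hd Hnear]].
  exists d. split; [exact Hd|]. intros [x y] Hp. destruct p0 as [x0 y0]. cbn [fst snd] in *.
  set (r := dist2 (x, y) (x0, y0)) in *.
  assert (Hx : Rabs (x - x0) <= r) by exact (Rabs_fst_le_dist2 (x, y) (x0, y0)).
  assert (Hy : Rabs (y - y0) <= r) by exact (Rabs_snd_le_dist2 (x, y) (x0, y0)).
  assert (Hhor : forall c, Rabs (c - x0) <= Rabs (x - x0) -> dist2 (c, y) (x0, y0) < d).
  { intros c Hc. eapply Rle_lt_trans; [|exact Hp]. apply dist2_le_compat; simpl; lra. }
  assert (Hver : forall c, Rabs (c - y0) <= Rabs (y - y0) -> dist2 (x0, c) (x0, y0) < d).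
  { intros c Hc. eapply Rle_lt_trans; [|exact Hp]. apply dist2_le_compat; simpl; [|lra].
    rewrite Rminus_diag, Rabs_R0. apply Rabs_pos. }
  destruct (MVT_cor4 (fun t => f (t, y)) (fun t => fx (t, y)) x0 (Rabs (x - x0)))
    with (b := x) as [c1 [Hc1 Hc1']]; [|lra|].
  { intros c Hc. exact (proj1 (proj1 (Hnear _ (Hhor c Hc)))). }
  destruct (MVT_cor4 (fun t => f (x0, t)) (fun t => fy (x0, t)) y0 (Rabs (y - y0)))
    with (b := y) as [c2 [Hc2 Hc2']]; [|lra|].
  { intros c Hc. exact (proj2 (proj1 (Hnear _ (Hver c Hc)))). }
  destruct (Hnear _ (Hhor c1 Hc1')) as [_ [E1 _]].
  destruct (Hnear _ (Hver c2 Hc2')) as [_ [_ E2]].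
  replace (f (x, y) - f (x0, y0) - (fx (x0, y0) * (x - x0) + fy (x0, y0) * (y - y0)))
    with ((fx (c1, y) - fx (x0, y0)) * (x - x0) + (fy (x0, c2) - fy (x0, y0)) * (y - y0))
    by lra.
  eapply Rle_trans; [apply Rabs_triang|]. rewrite !Rabs_mult.
  generalize (Rabs_pos (x - x0)) (Rabs_pos (y - y0)); nra.
Qed.

Lemma has_grad_bound (f : pt -> R) (p0 : pt) (g1 g2 : R) :
  has_grad f p0 g1 g2 ->
  near p0 (fun p => Rabs (f p - f p0) <= (Rabs g1 + Rabs g2 + 1) * dist2 p p0).
Proof.
  intros Hf. apply (near_impl _ _ _ (Hf 1 Rlt_0_1)). intros p Hp.
  assert (Hx := Rabs_fst_le_dist2 p p0). assert (Hy := Rabs_snd_le_dist2 p p0).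
  assert (Hlin : Rabs (g1 * (fst p - fst p0) + g2 * (snd p - snd p0))
                 <= (Rabs g1 + Rabs g2) * dist2 p p0).
  { eapply Rle_trans; [apply Rabs_triang|]. rewrite !Rabs_mult.
    generalize (Rabs_pos g1) (Rabs_pos g2); nra. }
  assert (T := Rabs_triang_inv (f p - f p0) (g1 * (fst p - fst p0) + g2 * (snd p - snd p0))).
  lra.
Qed.

Lemma field_norm_bound (V : pt -> pt) (p0 : pt) (j11 j12 j21 j22 : R) :
  V p0 = (0, 0) ->
  has_grad (fun p => fst (V p)) p0 j11 j12 -> has_grad (fun p => snd (V p)) p0 j21 j22 ->
  exists C, 0 < C /\ near p0 (fun p => norm2 (V p) <= C * dist2 p p0).
Proof.
  intros HV0 H1 H2.
  exists ((Rabs j11 + Rabs j12 + 1) + (Rabs j21 + Rabs j22 + 1)). split.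
  { generalize (Rabs_pos j11) (Rabs_pos j12) (Rabs_pos j21) (Rabs_pos j22); lra. }
  apply (near_impl _ _ _ (near_and _ _ _ (has_grad_bound _ _ _ _ H1) (has_grad_bound _ _ _ _ H2))).
  intros p [B1 B2]. rewrite HV0, Rminus_0_r in B1, B2. cbn [fst snd] in B1, B2.
  eapply Rle_trans; [apply norm2_le_Rabs | lra].
Qed.

Lemma has_grad_on_circle (f : pt -> R) (p0 : pt) (g1 g2 : R) :
  f p0 = 0 -> has_grad f p0 g1 g2 ->
  forall e, 0 < e -> exists r0, 0 < r0 /\ forall r t, 0 < r < r0 ->
    Rabs (f (circle_pt p0 r t) - r * (g1 * cos t + g2 * sin t)) <= e * r.
Proof.
  intros Hf0 Hf e He. destruct (Hf e He) as [r0 [Hr0 H]].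
  exists r0. split; [exact Hr0|]. intros r t Hr.
  assert (Hd := dist2_circle_pt p0 r t ltac:(lra)).
  specialize (H (circle_pt p0 r t) ltac:(lra)). rewrite Hd, Hf0 in H.
  unfold circle_pt in H |- *. cbn [fst snd] in H.
  replace (f (fst p0 + r * cos t, snd p0 + r * sin t) - r * (g1 * cos t + g2 * sin t))
    with (f (fst p0 + r * cos t, snd p0 + r * sin t) - 0 -
          (g1 * (fst p0 + r * cos t - fst p0) + g2 * (snd p0 + r * sin t - snd p0)))
    by ring.
  exact H.
Qed.

Lemma differential_is_id_of_grad (V : pt -> pt) (p0 : pt) :
  has_grad (fun p => fst (V p)) p0 1 0 -> has_grad (fun p => snd (V p)) p0 0 1 ->
  differential_is_id V p0.
Proof.
  intros H1 H2 e He.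
  destruct (near_and _ _ _ (H1 (e / 2) ltac:(lra)) (H2 (e / 2) ltac:(lra)))
    as [d [Hd Hnear]].
  exists d. split; [exact Hd|]. intros p Hp. destruct (Hnear p Hp) as [E1 E2].
  eapply Rle_trans; [apply norm2_le_Rabs|]. cbn [fst snd].
  replace (1 * (fst p - fst p0) + 0 * (snd p - snd p0)) with (fst p - fst p0) in E1 by ring.
  replace (0 * (fst p - fst p0) + 1 * (snd p - snd p0)) with (snd p - snd p0) in E2 by ring.
  lra.
Qed.

Definition sqn (v : pt) : R := fst v ^ 2 + snd v ^ 2.

Definition scale2 (l : R) (v : pt) : pt := (l * fst v, l * snd v).

Definition qform (qa qb qc : R) (v : pt) : R :=
  qa * fst v ^ 2 + qb * fst v * snd v + qc * snd v ^ 2.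

Lemma sqn_scale2 (l : R) (v : pt) : sqn (scale2 l v) = l ^ 2 * sqn v.
Proof. unfold sqn, scale2; simpl; ring. Qed.

Lemma qform_scale2 (qa qb qc l : R) (v : pt) :
  qform qa qb qc (scale2 l v) = l ^ 2 * qform qa qb qc v.
Proof. unfold qform, scale2; simpl; ring. Qed.

Lemma qform_coef_diff (qa qb qc qa' qb' qc' : R) (v : pt) :
  Rabs (qform qa qb qc v - qform qa' qb' qc' v)
  <= (Rabs (qa - qa') + Rabs (qb - qb') + Rabs (qc - qc')) * sqn v.
Proof.
  unfold qform, sqn. set (x := fst v). set (y := snd v).
  replace (qa * x ^ 2 + qb * x * y + qc * y ^ 2 - (qa' * x ^ 2 + qb' * x * y + qc' * y ^ 2))
    with ((qa - qa') * x ^ 2 + (qb - qb') * (x * y) + (qc - qc') * y ^ 2) by ring.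
  assert (Hxy : Rabs x * Rabs y <= x ^ 2 + y ^ 2).
  { rewrite <- (pow2_abs x), <- (pow2_abs y). generalize (Rabs_pos x) (Rabs_pos y); nra. }
  eapply Rle_trans; [apply Rabs_triang|].
  eapply Rle_trans; [apply Rplus_le_compat_r, Rabs_triang|].
  rewrite !Rabs_mult, !(Rabs_right (_ ^ 2)) by (apply Rle_ge, pow2_ge_0).
  assert (Ha := Rabs_pos (qa - qa')). assert (Hb := Rabs_pos (qb - qb')).
  assert (Hc := Rabs_pos (qc - qc')). assert (Hx := pow2_ge_0 x). assert (Hy := pow2_ge_0 y).
  assert (Rabs (qa - qa') * x ^ 2 <= Rabs (qa - qa') * (x ^ 2 + y ^ 2)) by nra.
  assert (Rabs (qb - qb') * (Rabs x * Rabs y) <= Rabs (qb - qb') * (x ^ 2 + y ^ 2)) by nra.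
  assert (Rabs (qc - qc') * y ^ 2 <= Rabs (qc - qc') * (x ^ 2 + y ^ 2)) by nra.
  lra.
Qed.

Definition perp (v : pt) : pt := (- snd v, fst v).

Definition qpolar (qa qb qc : R) (v w : pt) : R :=
  2 * qa * fst v * fst w + qb * (fst v * snd w + snd v * fst w) + 2 * qc * snd v * snd w.

Definition cone_vec (c : pt) (k s : R) : pt :=
  (k * fst c - s * snd c, k * snd c + s * fst c).

Definition dot (v w : pt) : R := fst v * fst w + snd v * snd w.

Definition balance (c : pt) (k : R) (v : pt) : R := dot c v - k * Rabs (dot (perp c) v).

Lemma sqn_cone_vec (c : pt) (k s : R) :
  s ^ 2 = 1 -> sqn (cone_vec c k s) = (k ^ 2 + 1) * sqn c.
Proof.
  intros Hs. unfold sqn, cone_vec; cbn [fst snd].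
  transitivity ((k ^ 2 + s ^ 2) * (fst c ^ 2 + snd c ^ 2)); [ring | rewrite Hs; ring].
Qed.

Lemma sign_sqr (s : R) : s = 1 \/ s = -1 -> s ^ 2 = 1.
Proof. intros [-> | ->]; ring. Qed.

(* Coordinates of v in the orthogonal frame (c, c^perp): the balance condition fixes
   the ratio of the two coordinates up to the sign of the second one. *)
Lemma cone_vec_of_balance (c : pt) (k : R) (v : pt) :
  0 < sqn c -> balance c k v = 0 ->
  exists s l, (s = 1 \/ s = -1) /\ v = scale2 l (cone_vec c k s).
Proof.
  intros Hc Hbal. destruct c as [c1 c2], v as [v1 v2].
  unfold balance, dot, perp, sqn in *; cbn [fst snd] in *.
  set (bt := - c2 * v1 + c1 * v2) in *.
  set (s := if Rle_dec 0 bt then 1 else -1).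
  assert (Hs : bt = s * Rabs bt /\ (s = 1 \/ s = -1)).
  { unfold s. destruct (Rle_dec 0 bt).
    - rewrite Rabs_right by lra. split; [ring | left; reflexivity].
    - rewrite Rabs_left by lra. split; [ring | right; reflexivity]. }
  destruct Hs as [Hbt Hs].
  exists s, (Rabs bt / (c1 ^ 2 + c2 ^ 2)). split; [exact Hs|].
  assert (Hal : c1 * v1 + c2 * v2 = k * Rabs bt) by lra.
  unfold scale2, cone_vec; cbn [fst snd]. f_equal.
  - apply (Rmult_eq_reg_l (c1 ^ 2 + c2 ^ 2)); [|lra].
    transitivity (c1 * (k * Rabs bt) - c2 * (s * Rabs bt));
      [rewrite <- Hal, <- Hbt; unfold bt; ring | field; lra].
  - apply (Rmult_eq_reg_l (c1 ^ 2 + c2 ^ 2)); [|lra].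
    transitivity (c2 * (k * Rabs bt) + c1 * (s * Rabs bt));
      [rewrite <- Hal, <- Hbt; unfold bt; ring | field; lra].
Qed.

(* Near s r c the component along c is about s r |c|^2 and the one along c^perp is small. *)
Lemma balance_sign (c : pt) (k r s eta : R) (v : pt) :
  0 < r -> 0 <= k <= 2 -> s = 1 \/ s = -1 ->
  (Rabs (fst c) + Rabs (snd c)) * eta <= sqn c / 4 ->
  Rabs (fst v - s * r * fst c) <= eta * r -> Rabs (snd v - s * r * snd c) <= eta * r ->
  0 < sqn c -> 0 < s * balance c k v.
Proof.
  intros Hr Hk Hs Heta H1 H2 Hc. destruct c as [c1 c2], v as [v1 v2].
  unfold balance, dot, perp, sqn in *; cbn [fst snd] in *.
  assert (Hlin : forall a b, Rabs (a * (v1 - s * r * c1) + b * (v2 - s * r * c2))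
                             <= (Rabs a + Rabs b) * (eta * r)).
  { intros a b. eapply Rle_trans; [apply Rabs_triang|]. rewrite !Rabs_mult.
    generalize (Rabs_pos a) (Rabs_pos b); nra. }
  assert (Hal := Hlin c1 c2). assert (Hbe := Hlin (- c2) c1).
  rewrite Rabs_Ropp, (Rplus_comm (Rabs c2)) in Hbe.
  replace (c1 * (v1 - s * r * c1) + c2 * (v2 - s * r * c2))
    with (c1 * v1 + c2 * v2 - s * r * (c1 ^ 2 + c2 ^ 2)) in Hal by ring.
  replace (- c2 * (v1 - s * r * c1) + c1 * (v2 - s * r * c2))
    with (- c2 * v1 + c1 * v2) in Hbe by ring.
  set (al := c1 * v1 + c2 * v2) in *. set (be := - c2 * v1 + c1 * v2) in *.
  assert (Hbe' : Rabs be <= r * (c1 ^ 2 + c2 ^ 2) / 4) by nra.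
  assert (Hal' : Rabs (al - s * r * (c1 ^ 2 + c2 ^ 2)) <= r * (c1 ^ 2 + c2 ^ 2) / 4) by nra.
  generalize (Rabs_pos be); intros.
  destruct Hs as [-> | ->];
    [generalize (Rabs_maj2 (al - 1 * r * (c1 ^ 2 + c2 ^ 2))) |
     generalize (Rle_abs (al - -1 * r * (c1 ^ 2 + c2 ^ 2)))]; nra.
Qed.

Lemma sign_choice_eq0 (F : R -> R) :
  (forall e, 0 < e -> exists s, (s = 1 \/ s = -1) /\ Rabs (F s) <= e) ->
  F 1 = 0 \/ F (-1) = 0.
Proof.
  intros H. destruct (Req_dec (F 1) 0) as [E | E]; [left; exact E|].
  destruct (Req_dec (F (-1)) 0) as [E' | E']; [right; exact E'|]. exfalso.
  assert (H1 := Rabs_pos_lt _ E). assert (H2 := Rabs_pos_lt _ E').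
  assert (Hm := Rmin_pos _ _ H1 H2).
  destruct (H (Rmin (Rabs (F 1)) (Rabs (F (-1))) / 2)) as [s [[-> | ->] Hs]]; [lra| |].
  - generalize (Rmin_l (Rabs (F 1)) (Rabs (F (-1)))); lra.
  - generalize (Rmin_r (Rabs (F 1)) (Rabs (F (-1)))); lra.
Qed.

Lemma qform_cone_vec (qa qb qc : R) (c : pt) (k s : R) :
  qform qa qb qc (cone_vec c k s) =
  k ^ 2 * qform qa qb qc c + k * s * qpolar qa qb qc c (perp c) + s ^ 2 * qform qa qb qc (perp c).
Proof. unfold qform, qpolar, cone_vec, perp; cbn [fst snd]; ring. Qed.

Lemma qform_eq0_of_frame (qa qb qc : R) (c : pt) :
  0 < sqn c -> qform qa qb qc c = 0 -> qform qa qb qc (perp c) = 0 ->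
  qpolar qa qb qc c (perp c) = 0 ->
  qa = 0 /\ qb = 0 /\ qc = 0.
Proof.
  intros Hc P Q B. destruct c as [c1 c2].
  unfold sqn, qform, qpolar, perp in *; cbn [fst snd] in *.
  assert (Hac : qc = - qa).
  { apply (Rmult_eq_reg_l (c1 ^ 2 + c2 ^ 2)); [|lra]. lra. }
  subst qc.
  set (d := c1 ^ 2 - c2 ^ 2) in *. set (g := c1 * c2) in *.
  assert (E1 : qa * d + qb * g = 0) by (rewrite <- P; unfold d, g; ring).
  assert (E2 : - 4 * qa * g + qb * d = 0) by (rewrite <- B; unfold d, g; ring).
  assert (Hdg : 0 < d ^ 2 + 4 * g ^ 2).
  { replace (d ^ 2 + 4 * g ^ 2) with ((c1 ^ 2 + c2 ^ 2) ^ 2) by (unfold d, g; ring). nra. }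
  assert (Ha : qa * (d ^ 2 + 4 * g ^ 2) = 0).
  { transitivity (d * (qa * d + qb * g) - g * (- 4 * qa * g + qb * d)); [ring|].
    rewrite E1, E2. ring. }
  assert (Hb : qb * (d ^ 2 + 4 * g ^ 2) = 0).
  { transitivity (4 * g * (qa * d + qb * g) + d * (- 4 * qa * g + qb * d)); [ring|].
    rewrite E1, E2. ring. }
  apply Rmult_integral in Ha as [Ha | Ha]; [|lra].
  apply Rmult_integral in Hb as [Hb | Hb]; [|lra].
  subst. lra.
Qed.

(* By qform_cone_vec, the three values k = 0, 1, 2 force q(c) = q(c^perp) = 0 and
   B(c, c^perp) = 0. *)
Lemma qform_eq0_of_cone_zeros (qa qb qc : R) (c : pt) (s0 s1 s2 : R) :
  0 < sqn c -> s0 = 1 \/ s0 = -1 -> s1 = 1 \/ s1 = -1 -> s2 = 1 \/ s2 = -1 ->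
  qform qa qb qc (cone_vec c 0 s0) = 0 ->
  qform qa qb qc (cone_vec c 1 s1) = 0 ->
  qform qa qb qc (cone_vec c 2 s2) = 0 ->
  qa = 0 /\ qb = 0 /\ qc = 0.
Proof.
  intros Hc Hs0 Hs1 Hs2 Q0 Q1 Q2.
  rewrite qform_cone_vec, (sign_sqr s0 Hs0) in Q0.
  rewrite qform_cone_vec, (sign_sqr s1 Hs1) in Q1.
  rewrite qform_cone_vec, (sign_sqr s2 Hs2) in Q2.
  apply (qform_eq0_of_frame qa qb qc c Hc).
  - destruct Hs1 as [-> | ->], Hs2 as [-> | ->]; lra.
  - lra.
  - destruct Hs1 as [-> | ->], Hs2 as [-> | ->]; lra.
Qed.

Definition mat_app (j11 j12 j21 j22 : R) (v : pt) : pt :=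
  (j11 * fst v + j12 * snd v, j21 * fst v + j22 * snd v).

Lemma continuity_pt_balance (c : pt) (k : R) (W : R -> pt) (t : R) :
  continuity_pt (fun s => fst (W s)) t -> continuity_pt (fun s => snd (W s)) t ->
  continuity_pt (fun s => balance c k (W s)) t.
Proof.
  intros H1 H2. unfold balance, dot, perp; cbn [fst snd].
  assert (Hcst : forall a, continuity_pt (fun _ => a) t)
    by (intros a; apply continuity_pt_const; intros ? ?; reflexivity).
  apply continuity_pt_minus; [apply continuity_pt_plus|apply continuity_pt_mult; [apply Hcst|]].
  - apply continuity_pt_mult; auto.
  - apply continuity_pt_mult; auto.
  - apply (continuity_pt_comp (fun s => - snd c * fst (W s) + fst c * snd (W s)) Rabs);
      [|apply Rcontinuity_abs].
    apply continuity_pt_plus; apply continuity_pt_mult; auto.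
Qed.

Lemma Rabs_sum_pos_of_sqn (v : pt) : 0 < sqn v -> 0 < Rabs (fst v) + Rabs (snd v).
Proof.
  unfold sqn. intros Hv. destruct (Req_dec (fst v) 0) as [E | E].
  - assert (Hs : snd v <> 0) by (intro Hs; rewrite E, Hs in Hv; lra).
    generalize (Rabs_pos_lt _ Hs) (Rabs_pos (fst v)); lra.
  - generalize (Rabs_pos_lt _ E) (Rabs_pos (snd v)); lra.
Qed.

(* On a small circle the field is close to r J(cos t, sin t), which is r c at t0 and
   -r c at t0 + PI. *)
Lemma balance_sign_change (V : pt -> pt) (p0 : pt) (j11 j12 j21 j22 t0 k : R) :
  V p0 = (0, 0) ->
  has_grad (fun p => fst (V p)) p0 j11 j12 -> has_grad (fun p => snd (V p)) p0 j21 j22 ->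
  0 < sqn (mat_app j11 j12 j21 j22 (cos t0, sin t0)) -> 0 <= k <= 2 ->
  exists r0, 0 < r0 /\ forall r, 0 < r < r0 ->
    0 < balance (mat_app j11 j12 j21 j22 (cos t0, sin t0)) k (V (circle_pt p0 r t0)) /\
    balance (mat_app j11 j12 j21 j22 (cos t0, sin t0)) k (V (circle_pt p0 r (t0 + PI))) < 0.
Proof.
  intros HV0 G1 G2 Hc Hk.
  set (c := mat_app j11 j12 j21 j22 (cos t0, sin t0)) in *.
  set (L := Rabs (fst c) + Rabs (snd c)).
  assert (HL : 0 < L) by (apply Rabs_sum_pos_of_sqn, Hc).
  set (eta := sqn c / (4 * L)).
  assert (Heta : 0 < eta) by (apply Rdiv_lt_0_compat; lra).
  assert (HLeta : L * eta <= sqn c / 4) by (right; unfold eta; field; lra).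
  assert (HV1 : fst (V p0) = 0) by (rewrite HV0; reflexivity).
  assert (HV2 : snd (V p0) = 0) by (rewrite HV0; reflexivity).
  destruct (has_grad_on_circle (fun p => fst (V p)) _ _ _ HV1 G1 eta Heta) as [r1 [Hr1 C1]].
  destruct (has_grad_on_circle (fun p => snd (V p)) _ _ _ HV2 G2 eta Heta) as [r2 [Hr2 C2]].
  exists (Rmin r1 r2). split; [apply Rmin_pos; assumption|]. intros r Hr.
  assert (Hsign : forall s t, s = 1 \/ s = -1 -> cos t = s * cos t0 -> sin t = s * sin t0 ->
                  0 < s * balance c k (V (circle_pt p0 r t))).
  { intros s t Hs Hct Hst.
    specialize (C1 r t ltac:(generalize (Rmin_l r1 r2); lra)).
    specialize (C2 r t ltac:(generalize (Rmin_r r1 r2); lra)).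
    rewrite Hct, Hst in C1, C2.
    apply (balance_sign c k r s eta); [lra | exact Hk | exact Hs | exact HLeta | | | exact Hc].
    - unfold c, mat_app; cbn [fst snd].
      replace (s * r * (j11 * cos t0 + j12 * sin t0))
        with (r * (j11 * (s * cos t0) + j12 * (s * sin t0))) by ring.
      exact C1.
    - unfold c, mat_app; cbn [fst snd].
      replace (s * r * (j21 * cos t0 + j22 * sin t0))
        with (r * (j21 * (s * cos t0) + j22 * (s * sin t0))) by ring.
      exact C2. }
  split.
  - rewrite <- Rmult_1_l. apply Hsign; lra.
  - assert (H := Hsign (-1) (t0 + PI) ltac:(lra) ltac:(rewrite neg_cos; ring)
                                               ltac:(rewrite neg_sin; ring)).
    lra.
Qed.

Lemma field_meets_balance (V : pt -> pt) (p0 : pt) (j11 j12 j21 j22 t0 k : R) :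
  near p0 (fun p => cont2_at (fun q => fst (V q)) p /\ cont2_at (fun q => snd (V q)) p) ->
  V p0 = (0, 0) ->
  has_grad (fun p => fst (V p)) p0 j11 j12 -> has_grad (fun p => snd (V p)) p0 j21 j22 ->
  0 < sqn (mat_app j11 j12 j21 j22 (cos t0, sin t0)) -> 0 <= k <= 2 ->
  forall d, 0 < d -> exists p, 0 < dist2 p p0 < d /\
    balance (mat_app j11 j12 j21 j22 (cos t0, sin t0)) k (V p) = 0.
Proof.
  intros [rho [Hrho Hcont]] HV0 G1 G2 Hc Hk d Hd.
  destruct (balance_sign_change V p0 j11 j12 j21 j22 t0 k HV0 G1 G2 Hc Hk)
    as [r0 [Hr0 Hchange]].
  set (c := mat_app j11 j12 j21 j22 (cos t0, sin t0)) in *.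
  set (r := Rmin (Rmin rho d) r0 / 2).
  assert (Hm := Rmin_pos _ _ (Rmin_pos _ _ Hrho Hd) Hr0).
  assert (Hr : 0 < r /\ r < rho /\ r < d /\ r < r0).
  { unfold r. generalize (Rmin_l (Rmin rho d) r0) (Rmin_r (Rmin rho d) r0)
      (Rmin_l rho d) (Rmin_r rho d); lra. }
  assert (Hdist : forall t, dist2 (circle_pt p0 r t) p0 = r)
    by (intros t; apply dist2_circle_pt; lra).
  set (g := fun t => balance c k (V (circle_pt p0 r t))).
  assert (Hg : continuity g).
  { intros t. destruct (Hcont (circle_pt p0 r t) ltac:(rewrite Hdist; lra)) as [H1 H2].
    apply (continuity_pt_balance c k (fun s => V (circle_pt p0 r s))).
    - exact (cont2_circle _ _ _ _ H1).
    - exact (cont2_circle _ _ _ _ H2). }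
  destruct (Hchange r ltac:(lra)) as [Hpos Hneg].
  destruct (IVT_gen g t0 (t0 + PI) 0 Hg) as [t [_ Ht]].
  { fold (g t0) (g (t0 + PI)) in Hpos, Hneg. rewrite Rmin_right, Rmax_left; lra. }
  exists (circle_pt p0 r t). rewrite Hdist. split; [lra | exact Ht].
Qed.

Lemma mat_app_nonzero (j11 j12 j21 j22 : R) :
  j11 <> 0 \/ j12 <> 0 \/ j21 <> 0 \/ j22 <> 0 ->
  exists t0, 0 < sqn (mat_app j11 j12 j21 j22 (cos t0, sin t0)).
Proof.
  intros Hj. unfold sqn, mat_app; cbn [fst snd].
  destruct (Req_dec j11 0); destruct (Req_dec j21 0).
  - exists (PI / 2). rewrite cos_PI2, sin_PI2.
    destruct Hj as [? | [? | [? | ?]]]; try contradiction;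
      [generalize (pow2_gt_0 j12 H1) (pow2_ge_0 (j21 * 0 + j22 * 1))
      |generalize (pow2_gt_0 j22 H1) (pow2_ge_0 (j11 * 0 + j12 * 1))]; intros; nra.
  - exists 0. rewrite cos_0, sin_0. generalize (pow2_gt_0 j21 H0); intros; nra.
  - exists 0. rewrite cos_0, sin_0. generalize (pow2_gt_0 j11 H); intros; nra.
  - exists 0. rewrite cos_0, sin_0. generalize (pow2_gt_0 j11 H); intros; nra.
Qed.

Lemma qform_eq0_of_field (V : pt -> pt) (p0 : pt) (j11 j12 j21 j22 qa qb qc : R) :
  near p0 (fun p => cont2_at (fun q => fst (V q)) p /\ cont2_at (fun q => snd (V q)) p) ->
  V p0 = (0, 0) ->
  has_grad (fun p => fst (V p)) p0 j11 j12 -> has_grad (fun p => snd (V p)) p0 j21 j22 ->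
  j11 <> 0 \/ j12 <> 0 \/ j21 <> 0 \/ j22 <> 0 ->
  near p0 (fun p => 0 < dist2 p p0 -> V p <> (0, 0)) ->
  (forall e, 0 < e -> near p0 (fun p =>
     0 < dist2 p p0 -> Rabs (qform qa qb qc (V p)) <= e * sqn (V p))) ->
  qa = 0 /\ qb = 0 /\ qc = 0.
Proof.
  intros Hcont HV0 G1 G2 Hj Hiso Hsmall.
  destruct (mat_app_nonzero _ _ _ _ Hj) as [t0 Hc].
  set (c := mat_app j11 j12 j21 j22 (cos t0, sin t0)) in *.
  assert (Hzero : forall k, 0 <= k <= 2 ->
    qform qa qb qc (cone_vec c k 1) = 0 \/ qform qa qb qc (cone_vec c k (-1)) = 0).
  { intros k Hk.
    apply (sign_choice_eq0 (fun s => qform qa qb qc (cone_vec c k s))). intros e He.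
    assert (HN : 0 < (k ^ 2 + 1) * sqn c) by (generalize (pow2_ge_0 k); nra).
    destruct (near_and _ _ _ Hiso (Hsmall (e / ((k ^ 2 + 1) * sqn c))
                                     ltac:(apply Rdiv_lt_0_compat; lra)))
      as [d [Hd Hnear]].
    destruct (field_meets_balance V p0 j11 j12 j21 j22 t0 k Hcont HV0 G1 G2 Hc Hk d Hd)
      as [p [Hp Hbal]].
    destruct (cone_vec_of_balance c k (V p) Hc Hbal) as [s [l [Hs HVp]]].
    exists s. split; [exact Hs|].
    destruct (Hnear p (proj2 Hp)) as [Hnz Hq]. specialize (Hq (proj1 Hp)).
    assert (Hl : 0 < l ^ 2).
    { apply pow2_gt_0. intros ->. apply Hnz; [exact (proj1 Hp)|].
      rewrite HVp. unfold scale2. f_equal; ring. }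
    rewrite HVp, qform_scale2, sqn_scale2, (sqn_cone_vec c k s (sign_sqr s Hs)), Rabs_mult,
      (Rabs_right (l ^ 2)) in Hq by lra.
    set (M := (k ^ 2 + 1) * sqn c) in *.
    replace (e / M * (l ^ 2 * M)) with (l ^ 2 * e) in Hq by (field; lra).
    apply Rmult_le_reg_l in Hq; assumption. }
  destruct (Hzero 0 ltac:(lra)) as [Z0 | Z0];
  destruct (Hzero 1 ltac:(lra)) as [Z1 | Z1];
  destruct (Hzero 2 ltac:(lra)) as [Z2 | Z2];
  (eapply (qform_eq0_of_cone_zeros qa qb qc c);
     [exact Hc | idtac | idtac | idtac | exact Z0 | exact Z1 | exact Z2]); lra.
Qed.

(* Angle of v, measured from the ray of angle t; it is a genuine polar angle as long as
   v points into the open half-plane around that ray. *)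
Definition polar_angle (t : R) (v : pt) : R :=
  t + atan ((- sin t * fst v + cos t * snd v) / (cos t * fst v + sin t * snd v)).

Lemma atan_polar (w1 w2 : R) : 0 < w1 ->
  w1 = sqrt (w1 ^ 2 + w2 ^ 2) * cos (atan (w2 / w1)) /\
  w2 = sqrt (w1 ^ 2 + w2 ^ 2) * sin (atan (w2 / w1)).
Proof.
  intros Hw. set (n := sqrt (w1 ^ 2 + w2 ^ 2)).
  assert (Hn2 : n * n = w1 ^ 2 + w2 ^ 2) by (apply sqrt_sqrt; nra).
  assert (Hn : 0 < n) by (apply sqrt_lt_R0; nra).
  assert (HS : sqrt (1 + (w2 / w1)²) = n / w1).
  { rewrite <- (sqrt_Rsqr (n / w1)) by (apply Rlt_le, Rdiv_lt_0_compat; assumption).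
    f_equal. unfold Rsqr. field_simplify_eq; [|lra]. transitivity (n * n); [rewrite Hn2 |]; ring. }
  rewrite cos_atan, sin_atan, HS. split; field; lra.
Qed.

Lemma polar_angle_spec (t : R) (v : pt) :
  0 < cos t * fst v + sin t * snd v ->
  fst v = norm2 v * cos (polar_angle t v) /\ snd v = norm2 v * sin (polar_angle t v).
Proof.
  intros Hw. unfold polar_angle, norm2.
  set (w1 := cos t * fst v + sin t * snd v) in *.
  set (w2 := - sin t * fst v + cos t * snd v).
  assert (Hcs := sin2_cos2 t). unfold Rsqr in Hcs.
  assert (Hw12 : fst v ^ 2 + snd v ^ 2 = w1 ^ 2 + w2 ^ 2).
  { unfold w1, w2.
    transitivity ((sin t * sin t + cos t * cos t) * (fst v ^ 2 + snd v ^ 2));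
      [rewrite Hcs | ]; ring. }
  rewrite Hw12. destruct (atan_polar w1 w2 Hw) as [E1 E2].
  set (n := sqrt (w1 ^ 2 + w2 ^ 2)) in *. set (phi := atan (w2 / w1)) in *.
  rewrite cos_plus, sin_plus. split.
  - transitivity (cos t * (n * cos phi) - sin t * (n * sin phi)); [|ring].
    rewrite <- E1, <- E2. unfold w1, w2.
    transitivity ((sin t * sin t + cos t * cos t) * fst v); [rewrite Hcs | ]; ring.
  - transitivity (sin t * (n * cos phi) + cos t * (n * sin phi)); [|ring].
    rewrite <- E1, <- E2. unfold w1, w2.
    transitivity ((sin t * sin t + cos t * cos t) * snd v); [rewrite Hcs | ]; ring.
Qed.

Lemma continuity_pt_polar_angle (W : R -> pt) (t : R) :
  continuity_pt (fun s => fst (W s)) t -> continuity_pt (fun s => snd (W s)) t ->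
  0 < cos t * fst (W t) + sin t * snd (W t) ->
  continuity_pt (fun s => polar_angle s (W s)) t.
Proof.
  intros H1 H2 Hw. unfold polar_angle.
  assert (Hc : continuity_pt cos t) by apply continuity_cos.
  assert (Hs : continuity_pt sin t) by apply continuity_sin.
  apply continuity_pt_plus; [apply continuity_pt_id|].
  apply (continuity_pt_comp (fun s => (- sin s * fst (W s) + cos s * snd (W s)) /
                                      (cos s * fst (W s) + sin s * snd (W s))) atan);
    [|apply derivable_continuous_pt, derivable_pt_atan].
  apply continuity_pt_div; [| |lra]; apply continuity_pt_plus; apply continuity_pt_mult;
    auto; apply continuity_pt_opp; exact Hs.
Qed.

(* Take d so that V(p) is within |p - p0| / 4 of the radius vector p - p0. *)
Lemma outward_on_small_circles (V : pt -> pt) (p0 : pt) :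
  V p0 = (0, 0) -> differential_is_id V p0 ->
  exists d, 0 < d /\ (forall p, 0 < dist2 p p0 < d -> V p <> (0, 0)) /\
    forall r t, 0 < r < d ->
      0 < cos t * fst (V (circle_pt p0 r t)) + sin t * snd (V (circle_pt p0 r t)).
Proof.
  intros HV0 Hid.
  destruct (Hid (1 / 4) ltac:(lra)) as [d [Hd Hnear]].
  assert (Hclose : forall p, dist2 p p0 < d ->
    Rabs (fst (V p) - (fst p - fst p0)) <= dist2 p p0 / 4 /\
    Rabs (snd (V p) - (snd p - snd p0)) <= dist2 p p0 / 4).
  { intros p Hp. specialize (Hnear p Hp). rewrite HV0 in Hnear. cbn [fst snd] in Hnear.
    rewrite !Rminus_0_r in Hnear.
    generalize (Rabs_fst_le_norm2 (fst (V p) - (fst p - fst p0), snd (V p) - (snd p - snd p0)))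
      (Rabs_snd_le_norm2 (fst (V p) - (fst p - fst p0), snd (V p) - (snd p - snd p0))).
    cbn [fst snd]. lra. }
  exists d. split; [exact Hd | split].
  - intros p [Hp0 Hp] HVp. destruct (Hclose p Hp) as [E1 E2].
    rewrite HVp in E1, E2. cbn [fst snd] in E1, E2. rewrite Rminus_0_l, Rabs_Ropp in E1, E2.
    generalize (dist2_le_Rabs p p0). lra.
  - intros r t Hr.
    assert (Hdist : dist2 (circle_pt p0 r t) p0 = r) by (apply dist2_circle_pt; lra).
    destruct (Hclose (circle_pt p0 r t)) as [E1 E2]; [rewrite Hdist; lra|].
    rewrite Hdist in E1, E2. unfold circle_pt in E1, E2 |- *. cbn [fst snd] in *.
    replace (fst p0 + r * cos t - fst p0) with (r * cos t) in E1 by ring.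
    replace (snd p0 + r * sin t - snd p0) with (r * sin t) in E2 by ring.
    set (v1 := fst (V (fst p0 + r * cos t, snd p0 + r * sin t))) in *.
    set (v2 := snd (V (fst p0 + r * cos t, snd p0 + r * sin t))) in *.
    assert (Hmul : forall a x, Rabs a <= 1 -> - Rabs x <= a * x).
    { intros a x Ha. generalize (Rabs_maj2 (a * x)). rewrite Rabs_mult.
      generalize (Rabs_pos a) (Rabs_pos x). nra. }
    assert (M1 := Hmul (cos t) (v1 - r * cos t) ltac:(apply Rabs_le, COS_bound)).
    assert (M2 := Hmul (sin t) (v2 - r * sin t) ltac:(apply Rabs_le, SIN_bound)).
    assert (Hcs := sin2_cos2 t). unfold Rsqr in Hcs.
    replace (cos t * v1 + sin t * v2) with
      (r * (sin t * sin t + cos t * cos t) + cos t * (v1 - r * cos t)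
       + sin t * (v2 - r * sin t)) by ring.
    rewrite Hcs. lra.
Qed.

(* The polar angle of V along the circle stays within PI/2 of the angle t of the
   circle point, so it gains exactly 2 PI over one turn. *)
Lemma index_one_of_differential_id (V : pt -> pt) (p0 : pt) :
  V p0 = (0, 0) ->
  near p0 (fun p => cont2_at (fun q => fst (V q)) p /\ cont2_at (fun q => snd (V q)) p) ->
  differential_is_id V p0 -> index_at V p0 1.
Proof.
  intros HV0 [rho [Hrho Hcont]] Hid.
  destruct (outward_on_small_circles V p0 HV0 Hid) as [d [Hd [Hiso Hout]]].
  split; [exact HV0|]. exists (Rmin rho d). split; [apply Rmin_pos; assumption|]. split.
  - intros p [Hp0 Hp]. apply Hiso. split; [exact Hp0|].
    eapply Rlt_le_trans; [exact Hp | apply Rmin_r].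
  - intros r [Hr0 Hr].
    assert (Hrd : 0 < r < d) by (split; [|eapply Rlt_le_trans; [exact Hr | apply Rmin_r]]; lra).
    exists (fun t => polar_angle t (V (circle_pt p0 r t))). split; [|split].
    + intros t.
      destruct (Hcont (circle_pt p0 r t)) as [C1 C2].
      { rewrite dist2_circle_pt by lra. eapply Rlt_le_trans; [exact Hr | apply Rmin_l]. }
      apply (continuity_pt_polar_angle (fun s => V (circle_pt p0 r s)));
        [exact (cont2_circle _ _ _ _ C1) | exact (cont2_circle _ _ _ _ C2) | apply Hout, Hrd].
    + intros t _. exact (polar_angle_spec t _ (Hout r t Hrd)).
    + unfold polar_angle, circle_pt. rewrite cos_2PI, sin_2PI, cos_0, sin_0. simpl IZR. ring.
Qed.

Lemma is_derive_plus_const (f : R -> R) (x l c : R) :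
  is_derive f x l -> is_derive (fun t => f t + c) x l.
Proof.
  intros H. replace l with (l + 0) by ring.
  apply (is_derive_plus f (fun _ => c)); [exact H | exact (is_derive_const (K := R_AbsRing) c x)].
Qed.

Lemma is_derive_normalized (g h : R -> R) (x g' h' : R) :
  is_derive g x g' -> is_derive h x h' -> 0 < g x ^ 2 + h x ^ 2 ->
  is_derive (fun t => g t / sqrt (g t ^ 2 + h t ^ 2)) x
    ((g' * h x ^ 2 - g x * h x * h') / sqrt (g x ^ 2 + h x ^ 2) ^ 3).
Proof.
  intros Hg Hh Hpos.
  assert (Hsq : is_derive (fun t => g t ^ 2 + h t ^ 2) x
                  (INR 2 * g' * g x ^ 1 + INR 2 * h' * h x ^ 1)).
  { apply (is_derive_plus (fun t => g t ^ 2) (fun t => h t ^ 2)); apply is_derive_pow; assumption. }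
  assert (Hs := is_derive_sqrt _ _ _ Hsq Hpos).
  set (D := sqrt (g x ^ 2 + h x ^ 2)) in *.
  assert (HD : 0 < D) by (apply sqrt_lt_R0; exact Hpos).
  assert (HD2 : D * D = g x ^ 2 + h x ^ 2) by (apply sqrt_sqrt; lra).
  assert (Hd := is_derive_div g (fun t => sqrt (g t ^ 2 + h t ^ 2)) x _ _ Hg Hs
                  ltac:(cbv beta; fold D; lra)).
  cbv beta in Hd. fold D in Hd.
  replace ((g' * h x ^ 2 - g x * h x * h') / D ^ 3)
    with ((g' * D - g x * ((INR 2 * g' * g x ^ 1 + INR 2 * h' * h x ^ 1) / (2 * D))) / D ^ 2);
    [exact Hd|].
  replace (h x ^ 2) with (D * D - g x ^ 2) by lra. simpl INR. field. lra.
Qed.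

Definition hess (u : pt -> R) (p : pt) : pt -> R :=
  qform (dx (dx u) p) (dy (dx u) p + dx (dy u) p) (dy (dy u) p).

Lemma Dlen_NperpD (u : pt -> R) (p : pt) : Dlen u p = norm2 (NperpD u p).
Proof. unfold Dlen, norm2, NperpD; cbn [fst snd]. f_equal. ring. Qed.

Lemma sqn_pos (v : pt) : v <> (0, 0) -> 0 < sqn v.
Proof.
  intros Hv. destruct v as [x y]. unfold sqn; cbn [fst snd].
  destruct (Req_dec x 0) as [-> | Hx].
  - assert (Hy : y <> 0) by (intros ->; apply Hv; reflexivity).
    generalize (pow2_gt_0 y Hy); nra.
  - generalize (pow2_gt_0 x Hx) (pow2_ge_0 y); lra.
Qed.

(* With a = u_x - y and b = u_y + x, D^3 div N = b^2 a_x - a b (b_x + a_y) + a^2 b_y,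
   and a_y = u_xy - 1, b_x = u_yx + 1 turn this into the Hessian of u at (b, -a). *)
Lemma Hcurv_mul_Dlen_cube (u : pt -> R) (p : pt) :
  ex_dx (dx u) p -> ex_dy (dx u) p -> ex_dx (dy u) p -> ex_dy (dy u) p ->
  NperpD u p <> (0, 0) ->
  Hcurv u p * Dlen u p ^ 3 = hess u p (NperpD u p).
Proof.
  intros Exx Eyx Exy Eyy Hnz.
  assert (Hpos := sqn_pos _ Hnz). destruct p as [x y].
  unfold sqn, NperpD in Hpos; cbn [fst snd] in Hpos.
  set (a := dx u (x, y) - y). set (b := dy u (x, y) + x).
  assert (Hab : 0 < a ^ 2 + b ^ 2) by (unfold a, b; nra).
  assert (E1 : dx (N1 u) (x, y) =
                 (dx (dx u) (x, y) * b ^ 2 - a * b * (dx (dy u) (x, y) + 1))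
                 / sqrt (a ^ 2 + b ^ 2) ^ 3).
  { apply is_derive_unique.
    apply (is_derive_normalized (fun t => dx u (t, y) - y) (fun t => dy u (t, y) + t));
      [apply is_derive_plus_const, (Derive_correct _ _ Exx) | | exact Hab].
    apply (is_derive_plus (fun t => dy u (t, y)) (fun t => t));
      [exact (Derive_correct _ _ Exy) | exact (is_derive_id (K := R_AbsRing) _)]. }
  assert (E2 : dy (N2 u) (x, y) =
                 (dy (dy u) (x, y) * a ^ 2 - b * a * (dy (dx u) (x, y) - 1))
                 / sqrt (b ^ 2 + a ^ 2) ^ 3).
  { apply is_derive_unique.
    eapply is_derive_ext;
      [|apply (is_derive_normalized (fun t => dy u (x, t) + x) (fun t => dx u (x, t) - t))].
    - intros t. unfold N2, Dlen; cbn [fst snd]. f_equal. f_equal. ring.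
    - apply is_derive_plus_const, (Derive_correct _ _ Eyy).
    - apply (is_derive_minus (fun t => dx u (x, t)) (fun t => t));
        [exact (Derive_correct _ _ Eyx) | exact (is_derive_id (K := R_AbsRing) _)].
    - cbn [fst snd]. fold a b. lra. }
  unfold Hcurv. rewrite E1, E2, (Rplus_comm (b ^ 2)).
  unfold Dlen, hess, qform, NperpD; cbn [fst snd]. fold a b.
  set (D := sqrt (a ^ 2 + b ^ 2)).
  assert (HD : 0 < D) by (apply sqrt_lt_R0; exact Hab).
  replace (- dx u (x, y) + y) with (- a) by (unfold a; ring).
  field. lra.
Qed.

Section C2Function.

Variables (O : pt -> Prop) (u : pt -> R).
Hypothesis HC2 : C2_on O u.

Lemma C2_ex_second (p : pt) :
  O p -> ex_dx (dx u) p /\ ex_dy (dx u) p /\ ex_dx (dy u) p /\ ex_dy (dy u) p.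
Proof. intros Hp. destruct (HC2 p Hp) as (_ & _ & H1 & H2 & H3 & H4 & _). tauto. Qed.

Lemma C2_cont_first (p : pt) : O p -> cont2_at (dx u) p /\ cont2_at (dy u) p.
Proof. intros Hp. destruct (HC2 p Hp) as (_ & _ & _ & _ & _ & _ & _ & H1 & H2 & _). tauto. Qed.

Lemma C2_cont_second (p : pt) :
  O p -> cont2_at (dx (dx u)) p /\ cont2_at (dy (dx u)) p /\
         cont2_at (dx (dy u)) p /\ cont2_at (dy (dy u)) p.
Proof. intros Hp. destruct (HC2 p Hp) as (_ & _ & _ & _ & _ & _ & _ & _ & _ & H). exact H. Qed.

Variable p0 : pt.
Hypothesis HO : near p0 O.

Lemma C2_schwarz : dy (dx u) p0 = dx (dy u) p0.
Proof.
  destruct (C2_cont_second p0 (near_center _ _ HO)) as (_ & Cyx & Cxy & _).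
  destruct p0 as [x0 y0].
  symmetry. apply (Schwarz (fun a b => u (a, b)) x0 y0).
  - apply locally_2d_of_near. apply (near_impl _ _ _ HO). intros [a b] Hp.
    destruct (HC2 _ Hp) as (E1 & E2 & _ & Eyx & Exy & _). tauto.
  - exact (continuity_2d_pt_of_cont2 _ _ _ Cxy).
  - exact (continuity_2d_pt_of_cont2 _ _ _ Cyx).
Qed.

Lemma NperpD_cont :
  near p0 (fun p => cont2_at (fun q => fst (NperpD u q)) p /\
                    cont2_at (fun q => snd (NperpD u q)) p).
Proof.
  apply (near_impl _ _ _ HO). intros p Hp. destruct (C2_cont_first p Hp) as [Cx Cy].
  split.
  - exact (cont2_plus _ _ _ Cy (cont2_fst p)).
  - exact (cont2_plus _ _ _ (cont2_opp _ _ Cx) (cont2_snd p)).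
Qed.

Lemma NperpD_grad :
  has_grad (fun p => fst (NperpD u p)) p0 (dx (dy u) p0 + 1) (dy (dy u) p0) /\
  has_grad (fun p => snd (NperpD u p)) p0 (- dx (dx u) p0) (- dy (dx u) p0 + 1).
Proof.
  destruct (C2_cont_second p0 (near_center _ _ HO)) as (Cxx & Cyx & Cxy & Cyy).
  split.
  - apply (has_grad_of_partials _ (fun p => dx (dy u) p + 1) (dy (dy u))).
    + apply (near_impl _ _ _ HO). intros p Hp.
      destruct (C2_ex_second p Hp) as (_ & _ & Exy & Eyy). unfold NperpD; cbn [fst snd]. split.
      * apply (is_derive_plus (fun t => dy u (t, snd p)) (fun t => t));
          [exact (Derive_correct _ _ Exy) | exact (is_derive_id (K := R_AbsRing) _)].
      * apply is_derive_plus_const, (Derive_correct _ _ Eyy).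
    + exact (cont2_plus _ _ _ Cxy (cont2_const 1 p0)).
    + exact Cyy.
  - apply (has_grad_of_partials _ (fun p => - dx (dx u) p) (fun p => - dy (dx u) p + 1)).
    + apply (near_impl _ _ _ HO). intros p Hp.
      destruct (C2_ex_second p Hp) as (Exx & Eyx & _). unfold NperpD; cbn [fst snd]. split.
      * apply is_derive_plus_const, (is_derive_opp (fun t => dx u (t, snd p))),
          (Derive_correct _ _ Exx).
      * apply (is_derive_plus (fun t => - dx u (fst p, t)) (fun t => t));
          [apply (is_derive_opp (fun t => dx u (fst p, t))), (Derive_correct _ _ Eyx)
          | exact (is_derive_id (K := R_AbsRing) _)].
    + exact (cont2_opp _ _ Cxx).
    + exact (cont2_plus _ _ _ (cont2_opp _ _ Cyx) (cont2_const 1 p0)).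
Qed.

Lemma NperpD_isolated_zero :
  (exists d, 0 < d /\ forall p, O p -> 0 < dist2 p p0 < d -> ~ sing O u p) ->
  near p0 (fun p => 0 < dist2 p p0 -> NperpD u p <> (0, 0)).
Proof.
  intros [d [Hd Hiso]].
  apply (near_impl _ _ _ (near_and _ _ _ HO (near_ball p0 d Hd))). intros p [Hp Hpd] Hp0 HV.
  apply (Hiso p Hp (conj Hp0 Hpd)). unfold NperpD in HV. injection HV as E1 E2.
  repeat split; [exact Hp | lra | lra].
Qed.

Lemma hess_NperpD_le (p : pt) (M : R) :
  O p -> 0 <= M ->
  (NperpD u p <> (0, 0) -> Rabs (Hcurv u p) * norm2 (NperpD u p) <= M) ->
  Rabs (hess u p (NperpD u p)) <= M * sqn (NperpD u p).
Proof.
  intros Hp HM HcurvM.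
  destruct (Req_dec (sqn (NperpD u p)) 0) as [HV0 | HVnz].
  - set (V := NperpD u p) in *.
    assert (Hx : fst V = 0) by (unfold sqn in HV0; nra).
    assert (Hy : snd V = 0) by (unfold sqn in HV0; nra).
    unfold hess, qform. rewrite Hx, Hy, HV0. rewrite Rabs_right; lra.
  - assert (Hnz : NperpD u p <> (0, 0))
      by (intros E; apply HVnz; rewrite E; unfold sqn; simpl; ring).
    specialize (HcurvM Hnz). destruct (C2_ex_second p Hp) as (Exx & Eyx & Exy & Eyy).
    rewrite <- (Hcurv_mul_Dlen_cube u p Exx Eyx Exy Eyy Hnz), Dlen_NperpD.
    set (V := NperpD u p) in *.
    assert (HN2 : norm2 V ^ 2 = sqn V) by (apply pow2_sqrt; unfold sqn; nra).
    assert (HN : 0 <= norm2 V) by apply sqrt_pos.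
    assert (HV : 0 <= sqn V) by (rewrite <- HN2; nra).
    replace (norm2 V ^ 3) with (norm2 V * sqn V) by (rewrite <- HN2; ring).
    rewrite Rabs_mult, (Rabs_right (norm2 V * sqn V)) by (apply Rle_ge; nra).
    nra.
Qed.

(* Since D = |N^perp D| = O(r), the hypothesis H = o(1/r) makes
   |Hess u_p (N^perp D)| = o(D^2), and the Hessian is continuous at p0. *)
Lemma hess_small_along_NperpD :
  (forall e, 0 < e -> exists d, 0 < d /\
     forall p, O p -> ~ sing O u p -> 0 < dist2 p p0 < d -> Rabs (Hcurv u p) * dist2 p p0 <= e) ->
  (exists C, 0 < C /\ near p0 (fun p => norm2 (NperpD u p) <= C * dist2 p p0)) ->
  forall e, 0 < e -> near p0 (fun p =>
    0 < dist2 p p0 -> Rabs (hess u p0 (NperpD u p)) <= e * sqn (NperpD u p)).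
Proof.
  intros HH [C [HC Hbound]] e He.
  destruct (HH (e / (2 * C)) ltac:(apply Rdiv_lt_0_compat; lra)) as [d [Hd Hcurv_small]].
  destruct (C2_cont_second p0 (near_center _ _ HO)) as (Cxx & Cyx & Cxy & Cyy).
  assert (Cmix := cont2_plus _ _ _ Cyx Cxy).
  apply (near_impl _ _ _
    (near_and _ _ _ (near_and _ _ _ HO Hbound)
      (near_and _ _ _ (near_ball p0 d Hd)
        (near_and _ _ _ (Cxx (e / 6) ltac:(lra))
          (near_and _ _ _ (Cmix (e / 6) ltac:(lra)) (Cyy (e / 6) ltac:(lra))))))).
  intros p [[Hp Hb] [Hpd [Dxx [Dmix Dyy]]]] Hp0.
  assert (Hat_p : Rabs (hess u p (NperpD u p)) <= e / 2 * sqn (NperpD u p)).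
  { apply hess_NperpD_le; [exact Hp | lra |]. intros Hnz.
    assert (Hns : ~ sing O u p).
    { intros [_ [S1 S2]]. apply Hnz. unfold NperpD. f_equal; lra. }
    specialize (Hcurv_small p Hp Hns (conj Hp0 Hpd)).
    apply Rle_trans with (C * (Rabs (Hcurv u p) * dist2 p p0)).
    - replace (C * (Rabs (Hcurv u p) * dist2 p p0))
        with (Rabs (Hcurv u p) * (C * dist2 p p0)) by ring.
      apply Rmult_le_compat_l; [apply Rabs_pos | exact Hb].
    - replace (e / 2) with (C * (e / (2 * C))) by (field; lra).
      apply Rmult_le_compat_l; lra. }
  set (V := NperpD u p) in *.
  assert (HV : 0 <= sqn V) by (unfold sqn; nra).
  assert (Hdiff := qform_coef_diff (dx (dx u) p0) (dy (dx u) p0 + dx (dy u) p0) (dy (dy u) p0)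
                     (dx (dx u) p) (dy (dx u) p + dx (dy u) p) (dy (dy u) p) V).
  rewrite (Rabs_minus_sym (dx (dx u) p0)), (Rabs_minus_sym (dy (dx u) p0 + dx (dy u) p0)),
    (Rabs_minus_sym (dy (dy u) p0)) in Hdiff.
  assert (T := Rabs_triang (hess u p0 V - hess u p V) (hess u p V)).
  replace (hess u p0 V - hess u p V + hess u p V) with (hess u p0 V) in T by ring.
  unfold hess in T, Hat_p |- *. nra.
Qed.

End C2Function.

Theorem lemma3p8 (O : pt -> Prop) (u : pt -> R) (p0 : pt) :
  domain2 O ->
  C2_on O u ->
  isolated_sing O u p0 ->
  (forall e, 0 < e -> exists d, 0 < d /\
     forall p, O p -> ~ sing O u p -> 0 < dist2 p p0 < d ->
       Rabs (Hcurv u p) * dist2 p p0 <= e) ->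
  differential_is_id (NperpD u) p0 /\
  index_at (NperpD u) p0 1%Z /\
  dx (dx u) p0 = 0 /\ dy (dx u) p0 = 0 /\ dx (dy u) p0 = 0 /\ dy (dy u) p0 = 0.
Proof.
  intros [_ [Hopen _]] HC2 [[HO0 [Hs1 Hs2]] Hiso] HH.
  assert (HO : near p0 O) by exact (Hopen p0 HO0).
  assert (HV0 : NperpD u p0 = (0, 0)) by (unfold NperpD; f_equal; lra).
  assert (Hsch := C2_schwarz O u HC2 p0 HO).
  destruct (NperpD_grad O u HC2 p0 HO) as [G1 G2].
  assert (Hcont := NperpD_cont O u HC2 p0 HO).
  assert (Hj : dx (dy u) p0 + 1 <> 0 \/ dy (dy u) p0 <> 0 \/
               - dx (dx u) p0 <> 0 \/ - dy (dx u) p0 + 1 <> 0).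
  { destruct (Req_dec (dx (dy u) p0 + 1) 0); [right; right; right | left]; lra. }
  destruct (qform_eq0_of_field _ _ _ _ _ _ _ _ _ Hcont HV0 G1 G2 Hj
              (NperpD_isolated_zero O u p0 HO Hiso)
              (hess_small_along_NperpD O u HC2 p0 HO HH (field_norm_bound _ _ _ _ _ _ HV0 G1 G2)))
    as (Hxx & Hmix & Hyy).
  assert (Hyx : dy (dx u) p0 = 0) by lra.
  assert (Hxy : dx (dy u) p0 = 0) by lra.
  rewrite Hxy, Hyy, Rplus_0_l in G1. rewrite Hxx, Hyx, Ropp_0, Rplus_0_l in G2.
  assert (Hid := differential_is_id_of_grad _ _ G1 G2).
  split; [exact Hid | split; [exact (index_one_of_differential_id _ _ HV0 Hcont Hid) |]].
  repeat split; assumption.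
Qed.
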